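(* Let $(D,\tau,d,\Delta)$ be a TMO instance and let $k\in\{1,\dots,d\}$. Let $D'_k$ be the graph obtained by identifying the sink of the gadget $G_k$ with the source $s$ of $D$ (so $D'_k$ has source $s'$ and sink $t$, and travel times $\tau$ on $D$ and as specified on $G_k$). Then every convoy routing for $(D,\tau,d,\Delta)$ using exactly $k$ paths can be transformed into $k$ pairwise arc-disjoint $s'$-$t$-paths in $D'_k$ whose maximum length equals the makespan of the convoy routing, and conversely every collection of $k$ pairwise arc-disjoint $s'$-$t$-paths in $D'_k$ can be transformed into a convoy routing for $(D,\tau,d,\Delta)$ using $k$ paths whose makespan equals the maximum length of the paths. In particular, the minimum makespan over convoy routings with exactly $k$ paths equals the optimum of \textsc{Min-Max Disjoint Paths} on $D'_k$ with $k$ paths.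
   Context: TMO instance $(D,\tau,d,\Delta)$: directed graph $D=(V,A)$ with source $s$, sink $t$, travel times $\tau:A\to\mathbb{Z}_{\ge0}$, $d\in\mathbb{Z}_{\ge1}$ trains and headway $\Delta\in\mathbb{Z}_{\ge1}$. A convoy routing $(\boldsymbol{P},\boldsymbol{\sigma})$ consists of $k\le d$ pairwise arc-disjoint $s$-$t$-paths $P_1,\dots,P_k$ in $D$ and $\boldsymbol{\sigma}\in\mathbb{Z}_{\ge1}^k$ with $\sum_i\sigma_i=d$; its makespan is $\max_{i\in[k]}\{\tau(P_i)+(\sigma_i-1)\Delta\}$, where $\tau(P)=\sum_{a\in P}\tau_a$. The gadget $G_k$ is a bundle graph from $s'$ to its sink: a sequence of $d-k$ consecutive bundles (vertices $u_0=s',u_1,\dots,u_{d-k}$), where the $j$-th bundle consists of $k$ parallel arcs from $u_{j-1}$ to $u_j$, exactly one with travel time $\Delta$ and $k-1$ with travel time $0$; if $d=k$ the gadget is the single vertex $s'=s$. \textsc{Min-Max Disjoint Paths}: find $k$ pairwise arc-disjoint source-sink paths minimizing the maximum path length. *)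

From mathcomp Require Import all_boot.
Set Implicit Arguments. Unset Strict Implicit. Unset Printing Implicit Defensive.

Section Graphs.
Variables (V A : finType) (tail head : A -> V).

Fixpoint walk (x y : V) (p : seq A) : bool :=
  match p with
  | [::] => x == y
  | a :: p' => (tail a == x) && walk (head a) y p'
  end.

Definition is_path (x y : V) (p : seq A) : bool :=
  walk x y p && uniq (x :: map head p).

Definition ptime (tau : A -> nat) (p : seq A) : nat := \sum_(a <- p) tau a.

Definition disjoint_paths (k : nat) (x y : V) (P : 'I_k -> seq A) : Prop :=
  (forall i, is_path x y (P i)) /\
  (forall i j, i != j -> forall a, a \in P i -> a \notin P j).

Definition convoy_routing (s t : V) (d k : nat)
    (P : 'I_k -> seq A) (sigma : 'I_k -> nat) : Prop :=
  disjoint_paths s t P /\ (forall i, 1 <= sigma i) /\ \sum_(i < k) sigma i = d.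

Definition makespan (tau : A -> nat) (Delta k : nat)
    (P : 'I_k -> seq A) (sigma : 'I_k -> nat) : nat :=
  \max_(i < k) (ptime tau (P i) + (sigma i - 1) * Delta).

Definition maxlen (tau : A -> nat) (k : nat) (P : 'I_k -> seq A) : nat :=
  \max_(i < k) ptime tau (P i).

End Graphs.

(* The graph D'_k: the gadget G_k (with n = d - k bundles, internal vertices
   u_0 = s', ..., u_{n-1}; u_n is identified with s) glued in front of D.
   Gadget arc (j, i) goes from u_j to u_{j+1}; its travel time is Delta
   if i = 0 and 0 otherwise (exactly one Delta-arc per bundle). *)
Section Gadget.
Variables (V A : finType) (tail head : A -> V) (s : V) (tau : A -> nat)
          (d k Delta : nat).

Definition gV := (V + 'I_(d - k))%type.
Definition gA := (A + ('I_(d - k) * 'I_k))%type.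

Definition gvert (j : nat) : gV :=
  match (insub j : option 'I_(d - k)) with
  | Some o => inr o
  | None => inl s
  end.

Definition gsource : gV := gvert 0.

Definition gtail (e : gA) : gV :=
  match e with inl a => inl (tail a) | inr (j, _) => gvert j end.

Definition ghead (e : gA) : gV :=
  match e with inl a => inl (head a) | inr (j, _) => gvert j.+1 end.

Definition gtau (e : gA) : nat :=
  match e with inl a => tau a | inr (_, i) => if val i == 0 then Delta else 0 end.

End Gadget.

From mathcomp Require Import all_boot all_fingroup zify.
Set Implicit Arguments. Unset Strict Implicit. Unset Printing Implicit Defensive.

(* Every s'-t path of D'_k crosses the d - k bundles of the gadget in order,
   one arc per bundle, and then follows an s-t path of D.  Pairwise
   arc-disjointness of k such paths forces each bundle to be used by all k
   paths, so its unique Delta-arc is used exactly once: the numbers c_i of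
   Delta-arcs on the paths sum to d - k, and sigma_i := c_i + 1 is a train
   distribution whose makespan term tau(P_i) + (sigma_i - 1) Delta is the
   length of the i-th path.  Conversely, given sigma, list every path i
   sigma_i - 1 times to decide which path takes the Delta-arc of each bundle,
   and let the other paths share the remaining 0-arcs of that bundle. *)

Lemma family_disjointP (I : finType) (T : eqType) (P : I -> seq T) :
  (forall i j, i != j -> forall a, a \in P i -> a \notin P j) <->
  (forall i j a, a \in P i -> a \in P j -> i = j).
Proof.
split=> [disj i j a Pi Pj | shared i j ne a Pi]; last first.
  by apply/negP=> /(shared _ _ _ Pi) eq_ij; rewrite eq_ij eqxx in ne.
by apply/eqP; apply: contraT => /disj /(_ a Pi); rewrite Pj.
Qed.

Lemma total_inj_rel_surj (T : finType) (r : rel T) :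
  (forall i, exists c, r i c) -> (forall i1 i2 c, r i1 c -> r i2 c -> i1 = i2) ->
  forall c, exists i, r i c.
Proof.
move=> total inj c.
have f_r i : r i (xchoose (total i)) := xchooseP (total i).
have f_inj : injective (fun i => xchoose (total i)).
  by move=> i1 i2 e; apply: (inj _ _ _ (f_r i1)); rewrite e.
have /codomP[i ->] := inj_card_onto f_inj (leqnn #|T|) c.
by exists i.
Qed.

Lemma count_snd_eq (I J : finType) (R : seq (I * J)) z : uniq R ->
  count (fun x => x.2 == z) R = \sum_(i : I) ((i, z) \in R).
Proof.
move=> uR; rewrite -sum1_count big_mkcond big_uniq //= big_mkcond /=.
pose F i j := if (i, j) \in R then nat_of_bool (j == z) else 0.
rewrite (eq_bigr (fun p => F p.1 p.2)); last by case=> i j _; rewrite /F; case: (j == z).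
rewrite -pair_bigA /=; apply: eq_bigr => i _.
rewrite (bigD1 z) //= big1 => [|j /negbTE]; rewrite /F ?eqxx.
  by rewrite addn0; case: ((i, z) \in R).
by move->; case: ifP.
Qed.

Lemma exists_fun_with_fibers (T : finType) (f : T -> nat) (n : nat) (t0 : T) :
  \sum_i f i = n -> exists o : 'I_n -> T, forall i, #|[pred j | o j == i]| = f i.
Proof.
move=> sum_f; pose L := flatten [seq nseq (f i) i | i <- enum T].
have size_L : size L = n.
  rewrite -sum_f size_flatten /shape -map_comp sumnE big_map big_enum.
  by apply: eq_bigr => i _; rewrite /= size_nseq.
exists (nth t0 L) => i.
have -> : #|[pred j : 'I_n | nth t0 L j == i]| = count (pred1 i) L.
  by rewrite -sum1_card -sum1_count -{2}(mkseq_nth t0 L) size_L big_map -val_enum_ord big_map big_enum_cond.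
rewrite count_flatten -map_comp sumnE big_map big_enum /= (bigD1 i) //= count_nseq /= eqxx mul1n.
by rewrite big1 ?addn0 // => j ne; rewrite count_nseq /= (negbTE ne).
Qed.

Lemma walk_catl (T E : finType) (tl hd : E -> T) x y z p q :
  walk tl hd x z p -> walk tl hd x y (p ++ q) = walk tl hd z y q.
Proof.
elim: p x => [|a p IH] x /=; first by move/eqP->.
by case/andP=> -> /IH.
Qed.

Section Gadget.
Variables (V A : finType) (tail head : A -> V) (s : V) (d k : nat).
Local Notation n := (d - k).
Local Notation gt := (@gtail V A tail s d k).
Local Notation gh := (@ghead V A head s d k).
Local Notation gv := (@gvert V s d k).

Lemma gvert_lt m (m_lt_n : m < n) : gv m = inr (Ordinal m_lt_n).
Proof. by rewrite /gvert insubT. Qed.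

Lemma gvert_ge m : n <= m -> gv m = inl s.
Proof. by move=> n_le_m; rewrite /gvert insubF // ltnNge n_le_m. Qed.

Lemma gvert_inj m1 m2 : m1 <= n -> m2 <= n -> gv m1 = gv m2 -> m1 = m2.
Proof.
move=> le1 le2; case: (ltnP m1 n) => l1; case: (ltnP m2 n) => l2.
- by rewrite !gvert_lt => -[].
- by rewrite gvert_lt gvert_ge.
- by rewrite gvert_ge // gvert_lt.
- lia.
Qed.

Lemma mem_inl_gverts v : (inl v \in map gv (iota 0 n.+1)) = (v == s).
Proof.
apply/mapP/eqP => [[m] | ->].
  rewrite mem_iota ltnS => /andP[_ le_mn].
  by case: (ltnP m n) => [lt_mn|ge_mn]; [rewrite gvert_lt | rewrite gvert_ge // => -[]].
by exists n; rewrite ?gvert_ge // mem_iota ltnS leqnn.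
Qed.

Lemma uniq_gverts : uniq (map gv (iota 0 n.+1)).
Proof.
rewrite map_inj_in_uniq ?iota_uniq // => m1 m2.
by rewrite !mem_iota !ltnS => /andP[_ ?] /andP[_ ?]; apply: gvert_inj.
Qed.

Lemma walk_inl x y p : walk gt gh (inl x) (inl y) (map inl p) = walk tail head x y p.
Proof. by elim: p x => [|a p IH] x //=; rewrite IH. Qed.

Lemma walk_inl_lift x y Q : walk gt gh (inl x) (inl y) Q ->
  exists2 p, Q = map inl p & walk tail head x y p.
Proof.
elim: Q x => [|[a|[j i]] Q IH] x /=; first by exists [::].
  by case/andP=> /eqP[<-] /IH[p -> walk_p]; exists (a :: p); rewrite //= eqxx.
by rewrite gvert_lt.
Qed.

Definition gadget_route (R : seq ('I_n * 'I_k)) : bool :=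
  [seq val x.1 | x <- R] == iota 0 n.

Lemma walk_gadget m R : [seq val x.1 | x <- R] = iota m (size R) ->
  walk gt gh (gv m) (gv (m + size R)) (map inr R).
Proof.
elim: R m => [|[j i] R IH] m /=; first by rewrite addn0.
by case=> <- bundles; rewrite eqxx -addSnnS; apply: IH.
Qed.

Lemma heads_gadget R : gadget_route R ->
  gv 0 :: map gh (map inr R) = map gv (iota 0 n.+1).
Proof.
move=> /eqP route_R /=; congr (_ :: _).
have -> : iota 1 n = map succn (iota 0 n) by rewrite (iotaDl 1 0).
by rewrite -route_R -!map_comp; apply: eq_map => -[].
Qed.

Lemma is_path_glue t R p : gadget_route R ->
  is_path gt gh (gsource s d k) (inl t) (map inr R ++ map inl p) = is_path tail head s t p.
Proof.
move=> route_R; have /eqP bundles := route_R.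
have walk_R : walk gt gh (gv 0) (gv n) (map inr R).
  have := @walk_gadget 0 R.
  by rewrite -(size_map (fun x : 'I_n * 'I_k => val x.1)) bundles size_iota; apply.
rewrite /is_path (walk_catl _ _ walk_R) gvert_ge // walk_inl; congr (_ && _).
rewrite map_cat -cat_cons heads_gadget // cat_uniq uniq_gverts -map_comp /=.
have -> : [seq (gh \o inl) a | a <- p] = map inl (map head p) by rewrite -map_comp.
rewrite (map_inj_uniq inl_inj) has_map; congr (~~ _ && _).
by rewrite -has_pred1; apply: eq_has => v; apply: mem_inl_gverts.
Qed.

Lemma walk_gadget_split t m Q : m <= n -> walk gt gh (gv m) (inl t) Q ->
  exists R p, [/\ Q = map inr R ++ map inl p, [seq val x.1 | x <- R] = iota m (n - m)
                & walk tail head s t p].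
Proof.
have from_s m' Q' : n <= m' -> walk gt gh (gv m') (inl t) Q' ->
    exists R p, [/\ Q' = map inr R ++ map inl p, [seq val x.1 | x <- R] = iota m' (n - m')
                  & walk tail head s t p].
  move=> ge_n; rewrite gvert_ge // => /walk_inl_lift[p -> walk_p].
  by exists [::], p; rewrite (eqP ge_n).
elim: Q m => [|e Q IH] m le_mn; have [lt_mn | ge_mn] := ltnP m n; try exact: from_s.
  by rewrite /= gvert_lt.
case: e => [a | [j i]] /=; first by rewrite gvert_lt.
case/andP=> /eqP /(gvert_inj (ltnW (ltn_ord j)) le_mn) j_m.
case/(IH _ (ltn_ord j))=> R [p [-> bundles walk_p]].
exists ((j, i) :: R), p; split=> //=.
by rewrite bundles j_m -(subnSK lt_mn).
Qed.

Lemma ptime_glue tau Delta R p :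
  ptime (@gtau A tau d k Delta) (map inr R ++ map inl p) =
  ptime tau p + count (fun x : 'I_n * 'I_k => val x.2 == 0) R * Delta.
Proof.
rewrite /ptime big_cat !big_map addnC /=; congr (_ + _).
rewrite (eq_bigr (fun x : 'I_n * 'I_k => if val x.2 == 0 then Delta else 0)); last by case.
by rewrite -big_mkcond big_const_seq iter_addn_0 mulnC.
Qed.

Lemma mem_glue_inl (R : seq ('I_n * 'I_k)) (p : seq A) a :
  (inl a \in (map inr R ++ map inl p : seq (gA A d k))) = (a \in p).
Proof. by rewrite mem_cat (mem_map inl_inj); case: mapP => // -[]. Qed.

Lemma mem_glue_inr (R : seq ('I_n * 'I_k)) (p : seq A) x :
  (inr x \in (map inr R ++ map inl p : seq (gA A d k))) = (x \in R).
Proof. by rewrite mem_cat (mem_map inr_inj) orbC; case: mapP => // -[]. Qed.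

Definition route_of (f : 'I_n -> 'I_k) : seq ('I_n * 'I_k) := [seq (j, f j) | j <- enum 'I_n].

Lemma gadget_route_of f : gadget_route (route_of f).
Proof. by rewrite /gadget_route -map_comp val_enum_ord. Qed.

Lemma mem_route_of f j c : ((j, c) \in route_of f) = (f j == c).
Proof.
apply/mapP/eqP => [[j' _ [-> ->]] // | <-].
by exists j; rewrite ?mem_enum.
Qed.

Section DeltaArcs.
Hypothesis k_gt0 : 0 < k.
Let z : 'I_k := Ordinal k_gt0.

Lemma delta_arcE (c : 'I_k) : (val c == 0) = (c == z).
Proof. by rewrite -val_eqE. Qed.

Lemma count_route_of f :
  count (fun x : 'I_n * 'I_k => val x.2 == 0) (route_of f) = #|[pred j | f j == z]|.
Proof.
rewrite count_map -sum1_count -sum1_card big_enum_cond /=.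
by apply: eq_bigl => j; rewrite /= delta_arcE.
Qed.

Lemma delta_count_sum (R : 'I_k -> seq ('I_n * 'I_k)) :
  (forall i, gadget_route (R i)) -> (forall i1 i2 x, x \in R i1 -> x \in R i2 -> i1 = i2) ->
  \sum_i count (fun x : 'I_n * 'I_k => val x.2 == 0) (R i) = n.
Proof.
move=> route_R disj.
have uniq_R i : uniq (R i).
  by apply: (@map_uniq _ _ (fun x : 'I_n * 'I_k => val x.1)); rewrite (eqP (route_R i)) iota_uniq.
have delta_once j : \sum_i ((j, z) \in R i) = 1.
  have [i0 R_i0] : exists i, (j, z) \in R i.
    apply: (total_inj_rel_surj (r := fun i c => (j, c) \in R i)) => [i|i1 i2 c]; last exact: disj.
    have : val j \in [seq val x.1 | x <- R i] by rewrite (eqP (route_R i)) mem_iota add0n ltn_ord.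
    by case/mapP=> -[j' c] R_jc /val_inj ej; exists c; rewrite ej.
  rewrite (bigD1 i0) //= R_i0 big1 // => i ne; apply/eqP; rewrite eqb0; apply/negP => R_i.
  by move/eqP: ne; apply; apply: disj R_i R_i0.
have delta_sum i : count (fun x : 'I_n * 'I_k => val x.2 == 0) (R i) = \sum_j ((j, z) \in R i).
  by rewrite -count_snd_eq //; apply: eq_count => x; apply: delta_arcE.
under eq_bigr do rewrite delta_sum.
rewrite exchange_big /=; under eq_bigr do rewrite delta_once.
by rewrite sum_nat_const card_ord muln1.
Qed.

Variables (t : V) (tau : A -> nat) (Delta : nat).

Lemma convoy_to_gadget_paths (P : 'I_k -> seq A) (sigma : 'I_k -> nat) :
  convoy_routing tail head s t d P sigma ->
  exists Q : 'I_k -> seq (gA A d k),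
    disjoint_paths gt gh (gsource s d k) (inl t) Q /\
    maxlen (@gtau A tau d k Delta) Q = makespan tau Delta P sigma.
Proof.
move=> [[path_P /family_disjointP disj_P] [sigma_gt0 sum_sigma]].
have [o fiber_o] : exists o : 'I_n -> 'I_k, forall i, #|[pred j | o j == i]| = sigma i - 1.
  apply: exists_fun_with_fibers z _.
  have : \sum_i (sigma i - 1 + 1) = d by rewrite -sum_sigma; apply: eq_bigr => i _; rewrite subnK.
  by rewrite big_split /= sum_nat_const card_ord muln1; lia.
(* In bundle j the train o j takes the Delta-arc z and train z takes arc o j. *)
pose R i := route_of (fun j => tperm (o j) z i).
exists (fun i => map inr (R i) ++ map inl (P i)); split; [split|].
- by move=> i; rewrite is_path_glue ?gadget_route_of.
- apply/family_disjointP => i1 i2 [a|[j c]]; rewrite ?mem_glue_inl ?mem_glue_inr; first exact: disj_P.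
  by rewrite !mem_route_of => /eqP <- /eqP /perm_inj.
- rewrite /maxlen /makespan; apply: eq_bigr => i _.
  rewrite ptime_glue count_route_of -fiber_o; congr (_ + _ * _); apply: eq_card => j /=.
  by rewrite !inE (can2_eq (tpermK _ _) (tpermK _ _)) tpermR eq_sym.
Qed.

Lemma gadget_paths_to_convoy (Q : 'I_k -> seq (gA A d k)) : k <= d ->
  disjoint_paths gt gh (gsource s d k) (inl t) Q ->
  exists (P : 'I_k -> seq A) (sigma : 'I_k -> nat),
    convoy_routing tail head s t d P sigma /\
    makespan tau Delta P sigma = maxlen (@gtau A tau d k Delta) Q.
Proof.
move=> le_kd [path_Q /family_disjointP disj_Q].
have split_Q i : exists R p, [/\ Q i = map inr R ++ map inl p, gadget_route R
                                & walk tail head s t p].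
  have [R [p [-> bundles walk_p]]] := walk_gadget_split (leq0n n) (andP (path_Q i)).1.
  by exists R, p; rewrite /gadget_route bundles subn0.
have [R /fin_all_exists[P /all_and3[Q_glue route_R _]]] := fin_all_exists split_Q.
pose ndelta i := count (fun x : 'I_n * 'I_k => val x.2 == 0) (R i).
exists P, (fun i => (ndelta i).+1); split; [split; [split|split] |] => //.
- by move=> i; rewrite -(is_path_glue t (P i) (route_R i)) -Q_glue.
- by apply/family_disjointP => i1 i2 a; rewrite -(mem_glue_inl (R i1)) -(mem_glue_inl (R i2)) -!Q_glue; apply: disj_Q.
- under eq_bigr do rewrite -addn1.
  rewrite big_split /= delta_count_sum // => [|i1 i2 x].
    by rewrite sum_nat_const card_ord muln1; lia.
  by rewrite -(mem_glue_inr _ (P i1)) -(mem_glue_inr _ (P i2)) -!Q_glue; apply: disj_Q.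
- rewrite /maxlen /makespan; apply: eq_bigr => i _.
  by rewrite Q_glue ptime_glue subn1.
Qed.

End DeltaArcs.

End Gadget.

Theorem mainTheorem7 (V A : finType) (tail head : A -> V) (s t : V)
    (tau : A -> nat) (d Delta k : nat) :
  1 <= d -> 1 <= Delta -> 1 <= k <= d ->
  (forall (P : 'I_k -> seq A) (sigma : 'I_k -> nat),
     convoy_routing tail head s t d P sigma ->
     exists Q : 'I_k -> seq (gA A d k),
       disjoint_paths (@gtail V A tail s d k) (@ghead V A head s d k)
         (@gsource V s d k) (inl t) Q /\
       maxlen (@gtau A tau d k Delta) Q = makespan tau Delta P sigma) /\
  (forall Q : 'I_k -> seq (gA A d k),
     disjoint_paths (@gtail V A tail s d k) (@ghead V A head s d k)
       (@gsource V s d k) (inl t) Q ->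
     exists (P : 'I_k -> seq A) (sigma : 'I_k -> nat),
       convoy_routing tail head s t d P sigma /\
       makespan tau Delta P sigma = maxlen (@gtau A tau d k Delta) Q).
Proof.
move=> _ _ /andP[k_gt0 le_kd]; split=> [P sigma | Q].
  exact: convoy_to_gadget_paths.
exact: gadget_paths_to_convoy.
Qed.
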